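(* Let $S$ be a (small) category. Then $S$ is a left gcd-category (resp., a right gcd-category, resp., a gcd-category) if and only if its universal monoid $\mathrm{U_{mon}}(S)$ is a left gcd-monoid (resp., a right gcd-monoid, resp., a gcd-monoid).
   Context: Categories are viewed ''arrow-only'': a category is a set $S$ with a partial associative multiplication in which every arrow $x$ has a source identity $\mathrm{s}(x)$ and a target identity $\mathrm{t}(x)$ with $x=\mathrm{s}(x)x=x\,\mathrm{t}(x)$, and $xy$ is defined iff $\mathrm{t}(x)=\mathrm{s}(y)$; $\mathrm{Id}\,S$ denotes the set of identities. The universal monoid $\mathrm{U_{mon}}(S)$ is the monoid presented by generators $\varepsilon_S(x)$, $x\in S$, and relations $\varepsilon_S(e)=1$ for $e\in\mathrm{Id}\,S$ and $\varepsilon_S(x)\varepsilon_S(y)=\varepsilon_S(xy)$ whenever $xy$ is defined; $\varepsilon_S:S\to\mathrm{U_{mon}}(S)$ is the canonical functor (it is initial among functors from $S$ to monoids). A category $S$ is conical if $xy\in\mathrm{Id}\,S$ implies $x\in\mathrm{Id}\,S$. Left divisibility: $a\leqslant b$ iff $b=ax$ for some $x\in S$; right divisibility: $a\mathbin{\widetilde\leqslant} b$ iff $b=xa$ for some $x$. A left gcd of a set is a greatest lower bound for $\leqslant$, a right gcd a greatest lower bound for $\mathbin{\widetilde\leqslant}$. $S$ is a left gcd-category if it is conical, left cancellative ($ax=ay\Rightarrow x=y$), and any $a,b\in S$ with $\mathrm{s}(a)=\mathrm{s}(b)$ have a left gcd; right gcd-categories are defined dually (right cancellative, any $a,b$ with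 $\mathrm{t}(a)=\mathrm{t}(b)$ have a right gcd); a gcd-category is both. When $S$ is a monoid (a category with one identity $1$) these are called left gcd-monoid, right gcd-monoid, gcd-monoid. *)

From Stdlib Require Import List.
Import ListNotations.
Set Implicit Arguments.

(** A category is a type of arrows with a partial multiplication
    [mul x y], meaningful iff [tgt x = src y].  [src x], [tgt x] are the
    source / target identities of [x]. *)
Record Category := {
  arr :> Type;
  src : arr -> arr;
  tgt : arr -> arr;
  mul : arr -> arr -> arr;
  src_src : forall x, src (src x) = src x;
  tgt_src : forall x, tgt (src x) = src x;
  src_tgt : forall x, src (tgt x) = tgt x;
  tgt_tgt : forall x, tgt (tgt x) = tgt x;
  mul_src_l : forall x, mul (src x) x = x;
  mul_tgt_r : forall x, mul x (tgt x) = x;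
  src_mul : forall x y, tgt x = src y -> src (mul x y) = src x;
  tgt_mul : forall x y, tgt x = src y -> tgt (mul x y) = tgt y;
  mul_assoc : forall x y z, tgt x = src y -> tgt y = src z ->
    mul (mul x y) z = mul x (mul y z)
}.
Arguments src {c} _.
Arguments tgt {c} _.
Arguments mul {c} _ _.

Definition is_identity {S : Category} (e : S) : Prop := src e = e.

(** They are stated for a "partial magma up to an equivalence":
    carrier [T], equivalence [eqv] (equality of elements), definedness
    predicate [def x y] ("xy is defined"), product [m], identity
    predicate [isId], and "same source"/"same target" relations. *)
Section Generic.
Variables (T : Type) (eqv : T -> T -> Prop) (def : T -> T -> Prop)
  (m : T -> T -> T) (isId : T -> Prop).

Definition conical : Prop :=
  forall x y, def x y -> isId (m x y) -> isId x.

Definition left_cancellative : Prop :=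
  forall a x y, def a x -> def a y -> eqv (m a x) (m a y) -> eqv x y.

Definition right_cancellative : Prop :=
  forall a x y, def x a -> def y a -> eqv (m x a) (m y a) -> eqv x y.

Definition ldiv (a b : T) : Prop := exists x, def a x /\ eqv b (m a x).
Definition rdiv (a b : T) : Prop := exists x, def x a /\ eqv b (m x a).

Definition is_glb (le : T -> T -> Prop) (g a b : T) : Prop :=
  le g a /\ le g b /\ (forall h, le h a -> le h b -> le h g).

Definition is_left_gcd_struct (same_src : T -> T -> Prop) : Prop :=
  conical /\ left_cancellative /\
  (forall a b, same_src a b -> exists g, is_glb ldiv g a b).

Definition is_right_gcd_struct (same_tgt : T -> T -> Prop) : Prop :=
  conical /\ right_cancellative /\
  (forall a b, same_tgt a b -> exists g, is_glb rdiv g a b).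
End Generic.

Definition left_gcd_category (S : Category) : Prop :=
  is_left_gcd_struct (@eq S) (fun x y => tgt x = src y) (@mul S)
    (@is_identity S) (fun a b => src a = src b).

Definition right_gcd_category (S : Category) : Prop :=
  is_right_gcd_struct (@eq S) (fun x y => tgt x = src y) (@mul S)
    (@is_identity S) (fun a b => tgt a = tgt b).

Definition gcd_category (S : Category) : Prop :=
  left_gcd_category S /\ right_gcd_category S.

(** * The universal monoid U_mon(S), given by its presentation:
    elements are words over the generators eps_S(x), x in S, modulo the
    congruence generated by eps(e) = 1 (e identity) and
    eps(x) eps(y) = eps(xy) (xy defined).  The word [[x]] represents
    eps_S(x), concatenation is the product, [[]] is 1. *)
Section UmonCong.
Variable S : Category.
Inductive umon_cong : list S -> list S -> Prop :=
| uc_id : forall e : S, is_identity e -> umon_cong [e] []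
| uc_mul : forall x y : S, tgt x = src y -> umon_cong [x; y] [mul x y]
| uc_refl : forall w, umon_cong w w
| uc_sym : forall u v, umon_cong u v -> umon_cong v u
| uc_trans : forall u v w, umon_cong u v -> umon_cong v w -> umon_cong u w
| uc_app : forall u u' v v', umon_cong u u' -> umon_cong v v' ->
    umon_cong (u ++ v) (u' ++ v').
End UmonCong.
Arguments umon_cong {S} _ _.

(** gcd notions for U_mon(S), viewed as a category with one identity 1
    (every product defined, every pair has same source/target). *)
Definition umon_eqv (S : Category) := @umon_cong S.
Definition umon_isId (S : Category) (w : list S) : Prop := umon_cong w [].

Definition umon_left_gcd_monoid (S : Category) : Prop :=
  is_left_gcd_struct (@umon_eqv S) (fun _ _ => True) (@app S)
    (@umon_isId S) (fun _ _ => True).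

Definition umon_right_gcd_monoid (S : Category) : Prop :=
  is_right_gcd_struct (@umon_eqv S) (fun _ _ => True) (@app S)
    (@umon_isId S) (fun _ _ => True).

Definition umon_gcd_monoid (S : Category) : Prop :=
  umon_left_gcd_monoid S /\ umon_right_gcd_monoid S.

From Stdlib Require Import List Classical ClassicalEpsilon.
Import ListNotations.

(* Every element of U_mon(S) is represented by a unique reduced word (no
   identity letter, no two consecutive composable letters), computed by
   multiplying letters in from the left.  When S is conical, the left divisors
   of a reduced word w in U_mon(S) are exactly the reduced words that agree
   with w except for their last letter, which left-divides the corresponding
   letter of w in S.  Conicity, left cancellativity and left gcds therefore
   pass letter by letter between S and U_mon(S).  The right-hand statements
   are the left ones for the opposite category, whose universal monoid is
   U_mon(S) with words reversed. *)

Section Identities.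
Context {S : Category}.
Implicit Types e x y z : S.

Lemma identity_tgt e : is_identity e -> tgt e = e.
Proof. unfold is_identity; intro He. rewrite <- He at 1. rewrite tgt_src. exact He. Qed.

Lemma src_is_identity x : is_identity (src x).
Proof. apply src_src. Qed.

Lemma tgt_is_identity x : is_identity (tgt x).
Proof. apply src_tgt. Qed.

Lemma mul_identity_l e y : is_identity e -> tgt e = src y -> mul e y = y.
Proof. intros He Hey. rewrite identity_tgt in Hey by exact He. subst e. apply mul_src_l. Qed.

Lemma mul_identity_r x e : is_identity e -> tgt x = src e -> mul x e = x.
Proof. intros He Hxe. rewrite He in Hxe. subst e. apply mul_tgt_r. Qed.

Lemma category_conical_flip :
  conical (fun x y : S => tgt x = src y) mul is_identity <->
  conical (fun x y : S => tgt y = src x) (fun x y => mul y x) is_identity.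
Proof.
  split; intros Hcon x y Hxy Hid.
  - pose proof (Hcon y x Hxy Hid) as Hy. rewrite mul_identity_l in Hid; auto.
  - pose proof (Hcon y x Hxy Hid) as Hy. rewrite mul_identity_r in Hid; auto.
Qed.

End Identities.

Section ReducedWords.
Context {S : Category}.
Implicit Types x y z : S.
Implicit Types u v w : list S.

Definition push x w : list S :=
  if excluded_middle_informative (is_identity x) then w else x :: w.

Definition noncomposable_head x w : Prop :=
  match w with [] => True | y :: _ => tgt x <> src y end.

Fixpoint reduced w : Prop :=
  match w with
  | [] => True
  | x :: w' => ~ is_identity x /\ reduced w' /\ noncomposable_head x w'
  end.

(* [ins x w] is the reduced word of x w when w is reduced. *)
Definition ins x w : list S :=
  match w with
  | y :: w' =>
      if excluded_middle_informative (tgt x = src y) then push (mul x y) w'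
      else push x w
  | [] => push x []
  end.

Definition act u w : list S := fold_right ins w u.

Definition nf u : list S := act u [].

Lemma push_identity x w : is_identity x -> push x w = w.
Proof. unfold push. destruct (excluded_middle_informative _); tauto. Qed.

Lemma push_nonidentity x w : ~ is_identity x -> push x w = x :: w.
Proof. unfold push. destruct (excluded_middle_informative _); tauto. Qed.

Lemma ins_cons_composable x y w : tgt x = src y -> ins x (y :: w) = push (mul x y) w.
Proof. simpl. destruct (excluded_middle_informative _); tauto. Qed.

Lemma ins_noncomposable_head x w : noncomposable_head x w -> ins x w = push x w.
Proof.
  destruct w as [|y w]; simpl; [reflexivity|].
  destruct (excluded_middle_informative _); tauto.
Qed.

Lemma noncomposable_head_tgt x y w :
  tgt x = tgt y -> noncomposable_head y w -> noncomposable_head x w.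
Proof. destruct w; simpl; congruence. Qed.

Lemma push_reduced x w : reduced w -> noncomposable_head x w -> reduced (push x w).
Proof.
  intros Hw Hx. destruct (classic (is_identity x)).
  - rewrite push_identity; auto.
  - rewrite push_nonidentity; simpl; auto.
Qed.

Lemma ins_reduced x w : reduced w -> reduced (ins x w).
Proof.
  intro Hw. destruct w as [|y w']; [apply push_reduced; simpl; auto|].
  destruct Hw as (Hy & Hw' & Hyw').
  destruct (classic (tgt x = src y)) as [Hxy|Hxy].
  - rewrite ins_cons_composable by exact Hxy. apply push_reduced; auto.
    apply noncomposable_head_tgt with y; auto. apply tgt_mul; exact Hxy.
  - rewrite ins_noncomposable_head by exact Hxy. apply push_reduced; simpl; auto.
Qed.

Lemma ins_identity e w : is_identity e -> reduced w -> ins e w = w.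
Proof.
  intros He Hw. destruct w as [|y w']; [apply push_identity; exact He|].
  destruct Hw as (Hy & _). destruct (classic (tgt e = src y)) as [Hey|Hey].
  - rewrite ins_cons_composable, mul_identity_l, push_nonidentity; auto.
  - rewrite ins_noncomposable_head, push_identity; auto.
Qed.

Lemma ins_mul x y w : reduced w -> tgt x = src y -> ins x (ins y w) = ins (mul x y) w.
Proof.
  intros Hw Hxy. destruct w as [|z w'].
  - destruct (classic (is_identity y)) as [Hy|Hy].
    + simpl. rewrite push_identity, mul_identity_r; auto.
    + simpl ins at 2. rewrite push_nonidentity by exact Hy.
      rewrite ins_cons_composable; auto.
  - destruct Hw as (Hz & Hw' & Hzw').
    destruct (classic (tgt y = src z)) as [Hyz|Hyz].
    + rewrite (ins_cons_composable y), (ins_cons_composable (mul x y)), mul_assoc;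
        auto; [|rewrite tgt_mul; auto].
      destruct (classic (is_identity (mul y z))) as [Hid|Hid].
      * assert (Htgt : tgt x = tgt z).
        { rewrite <- (tgt_mul _ y z), (identity_tgt (mul y z)), <- Hid, src_mul; auto. }
        rewrite push_identity, mul_identity_r by (auto; rewrite src_mul; auto).
        apply ins_noncomposable_head, noncomposable_head_tgt with z; auto.
      * rewrite push_nonidentity, ins_cons_composable by (auto; rewrite src_mul; auto).
        reflexivity.
    + rewrite (ins_noncomposable_head y) by exact Hyz.
      destruct (classic (is_identity y)) as [Hy|Hy].
      * rewrite push_identity, mul_identity_r; auto.
      * rewrite push_nonidentity, ins_cons_composable, ins_noncomposable_head by
          (auto; simpl; rewrite tgt_mul; auto).
        reflexivity.
Qed.

Lemma act_reduced u w : reduced w -> reduced (act u w).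
Proof. intro Hw. induction u; simpl; auto using ins_reduced. Qed.

Lemma act_app u v w : act (u ++ v) w = act u (act v w).
Proof. apply fold_right_app. Qed.

Lemma umon_cong_act u v : umon_cong u v -> forall w, reduced w -> act u w = act v w.
Proof.
  induction 1 as [e He|x y Hxy|u|u v _ IH|u v t _ IH1 _ IH2|u u' v v' _ IHu _ IHv];
    intros w Hw.
  - apply ins_identity; auto.
  - apply ins_mul; auto.
  - reflexivity.
  - symmetry; auto.
  - rewrite IH1, IH2; auto.
  - rewrite !act_app, IHv, IHu; auto using act_reduced.
Qed.

Lemma umon_cong_push x w : umon_cong (x :: w) (push x w).
Proof.
  destruct (classic (is_identity x)) as [Hx|Hx].
  - rewrite push_identity by exact Hx. exact (uc_app (uc_id Hx) (uc_refl _ w)).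
  - rewrite push_nonidentity by exact Hx. apply uc_refl.
Qed.

Lemma umon_cong_ins x w : umon_cong (x :: w) (ins x w).
Proof.
  destruct w as [|y w']; [apply umon_cong_push|].
  destruct (classic (tgt x = src y)) as [Hxy|Hxy].
  - rewrite ins_cons_composable by exact Hxy.
    apply uc_trans with ([mul x y] ++ w'); [|apply umon_cong_push].
    exact (uc_app (uc_mul _ _ _ Hxy) (uc_refl _ w')).
  - rewrite ins_noncomposable_head by exact Hxy. apply umon_cong_push.
Qed.

Lemma umon_cong_nf w : umon_cong w (nf w).
Proof.
  induction w as [|x w IH]; [apply uc_refl|].
  apply uc_trans with (x :: nf w); [exact (uc_app (uc_refl _ [x]) IH)|].
  apply umon_cong_ins.
Qed.

Lemma nf_reduced u : reduced (nf u).
Proof. apply act_reduced; exact I. Qed.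

Lemma umon_cong_iff_nf u v : umon_cong u v <-> nf u = nf v.
Proof.
  split.
  - intro Huv. apply umon_cong_act; [exact Huv|exact I].
  - intro E. apply uc_trans with (nf u); [apply umon_cong_nf|].
    rewrite E. apply uc_sym, umon_cong_nf.
Qed.

Lemma nf_app u v : nf (u ++ v) = act (nf u) (nf v).
Proof.
  unfold nf at 1. rewrite act_app.
  apply umon_cong_act; [apply umon_cong_nf|apply nf_reduced].
Qed.

Lemma nf_of_reduced {w} : reduced w -> nf w = w.
Proof.
  induction w as [|x w IH]; [reflexivity|]. intros (Hx & Hw & Hxw).
  change (ins x (nf w) = x :: w).
  rewrite IH, ins_noncomposable_head, push_nonidentity; auto.
Qed.

Lemma nf_letter x : nf [x] = push x [].
Proof. reflexivity. Qed.

End ReducedWords.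

Section Divisibility.
Context {S : Category}.
Implicit Types a b c h p x y z : S.
Implicit Types g u v w : list S.

Definition cat_ldiv a b : Prop := ldiv (@eq S) (fun x y => tgt x = src y) mul a b.

Definition umon_ldiv u v : Prop := ldiv (@umon_eqv S) (fun _ _ => True) (@app S) u v.

Lemma umon_ldiv_cong {u u' v v'} :
  umon_cong u u' -> umon_cong v v' -> umon_ldiv u v -> umon_ldiv u' v'.
Proof.
  intros Hu Hv (x & _ & Hx). exists x. split; [trivial|].
  apply uc_trans with v; [exact (uc_sym Hv)|].
  apply uc_trans with (u ++ x); [exact Hx|exact (uc_app Hu (uc_refl _ x))].
Qed.

Lemma cat_ldiv_refl a : cat_ldiv a a.
Proof. exists (tgt a). split; [symmetry; apply src_tgt|symmetry; apply mul_tgt_r]. Qed.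

Lemma cat_ldiv_src_l a : cat_ldiv (src a) a.
Proof. exists a. split; [apply tgt_src|symmetry; apply mul_src_l]. Qed.

Lemma cat_ldiv_src {a b} : cat_ldiv a b -> src a = src b.
Proof. intros (r & Hr & ->). symmetry. apply src_mul; exact Hr. Qed.

Lemma cat_ldiv_identity_l h a : is_identity h -> cat_ldiv h a <-> h = src a.
Proof.
  intro Hh. split.
  - intro Hha. rewrite <- (cat_ldiv_src Hha). symmetry. exact Hh.
  - intros ->. apply cat_ldiv_src_l.
Qed.

Fixpoint ldiv_prefix g w : Prop :=
  match g, w with
  | [], _ => True
  | _ :: _, [] => False
  | p :: g', x :: w' => (p = x /\ ldiv_prefix g' w') \/ (g' = [] /\ cat_ldiv p x)
  end.

Lemma ldiv_prefix_head {p g x w} : ldiv_prefix (p :: g) (x :: w) -> cat_ldiv p x.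
Proof. intros [[-> _]|[_ H]]; [apply cat_ldiv_refl|exact H]. Qed.

Lemma ldiv_prefix_nil_r {g} : ldiv_prefix g [] -> g = [].
Proof. destruct g; simpl; tauto. Qed.

Lemma noncomposable_head_prefix {x g w} :
  ldiv_prefix g w -> noncomposable_head x w -> noncomposable_head x g.
Proof.
  destruct g as [|p g]; [trivial|]. destruct w as [|y w]; [contradiction|].
  intros Hpre Hxy. simpl. rewrite (cat_ldiv_src (ldiv_prefix_head Hpre)). exact Hxy.
Qed.

Lemma umon_ldiv_of_prefix {g w} : ldiv_prefix g w -> umon_ldiv g w.
Proof.
  revert w. induction g as [|p g IH]; intros w Hpre.
  - exists w. split; [trivial|apply uc_refl].
  - destruct w as [|x w]; [contradiction|].
    destruct Hpre as [[-> Hpre]|[-> (r & Hr & ->)]].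
    + destruct (IH w Hpre) as (h & _ & Hh). exists h.
      split; [trivial|exact (uc_app (uc_refl _ [x]) Hh)].
    + exists (r :: w). split; [trivial|].
      exact (uc_app (uc_sym (uc_mul _ _ _ Hr)) (uc_refl _ w)).
Qed.

Section Conical.
Hypothesis S_conical : conical (fun x y : S => tgt x = src y) mul is_identity.

Lemma mul_nonidentity p z : ~ is_identity p -> tgt p = src z -> ~ is_identity (mul p z).
Proof. intros Hp Hpz Hid. exact (Hp (S_conical _ _ Hpz Hid)). Qed.

Lemma divisor_of_identity p c : cat_ldiv p c -> is_identity c -> is_identity p.
Proof. intros (r & Hr & ->). exact (S_conical _ _ Hr). Qed.

Lemma ins_nonidentity {p k} : ~ is_identity p -> reduced k ->
  ins p k = p :: k \/ exists z k', k = z :: k' /\ tgt p = src z /\ ins p k = mul p z :: k'.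
Proof.
  intros Hp Hk. destruct k as [|z k']; [left; apply push_nonidentity; exact Hp|].
  destruct (classic (tgt p = src z)) as [Hpz|Hpz].
  - right. exists z, k'. rewrite ins_cons_composable, push_nonidentity;
      auto using mul_nonidentity.
  - left. rewrite ins_noncomposable_head, push_nonidentity; auto.
Qed.

(* In g w the letters of g survive, except that the last one may absorb the
   first letter of w; conicity prevents it from collapsing to an identity. *)
Lemma ldiv_prefix_act g w : reduced g -> reduced w -> ldiv_prefix g (act g w).
Proof.
  intros Hg Hw. induction g as [|p g IH]; [exact I|].
  destruct Hg as (Hp & Hg & Hpg). change (ldiv_prefix (p :: g) (ins p (act g w))).
  destruct g as [|q g].
  - change (ldiv_prefix [p] (ins p w)).
    destruct (ins_nonidentity Hp Hw) as [->|(z & w' & -> & Hpz & ->)].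
    + left. split; [reflexivity|exact I].
    + right. split; [reflexivity|]. exists z. split; [exact Hpz|reflexivity].
  - specialize (IH Hg). destruct (act (q :: g) w) as [|z k] eqn:E; [contradiction|].
    rewrite ins_noncomposable_head, push_nonidentity by
      (auto; simpl; rewrite <- (cat_ldiv_src (ldiv_prefix_head IH)); exact Hpg).
    left. split; [reflexivity|exact IH].
Qed.

Lemma umon_ldiv_iff_prefix u v : umon_ldiv u v <-> ldiv_prefix (nf u) (nf v).
Proof.
  split.
  - intros (x & _ & Hx). apply umon_cong_iff_nf in Hx. rewrite Hx, nf_app.
    apply ldiv_prefix_act; apply nf_reduced.
  - intro Hpre. destruct (umon_ldiv_of_prefix Hpre) as (h & _ & Hh).
    exists h. split; [trivial|].
    apply uc_trans with (nf v); [apply umon_cong_nf|].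
    apply uc_trans with (nf u ++ h); [exact Hh|].
    exact (uc_app (uc_sym (umon_cong_nf u)) (uc_refl _ h)).
Qed.

Lemma umon_ldiv_letters h a : ~ is_identity h -> umon_ldiv [h] [a] <-> cat_ldiv h a.
Proof.
  intro Hh. split.
  - rewrite umon_ldiv_iff_prefix, !nf_letter, (push_nonidentity h [] Hh).
    destruct (classic (is_identity a)) as [Ha|Ha].
    + rewrite push_identity by exact Ha. contradiction.
    + rewrite push_nonidentity by exact Ha. apply ldiv_prefix_head.
  - intros (r & Hr & ->). exists [r]. split; [trivial|exact (uc_sym (uc_mul _ _ _ Hr))].
Qed.

Lemma umon_divisor_of_letter {g a} :
  umon_ldiv g [a] -> exists c, cat_ldiv c a /\ umon_cong g [c].
Proof.
  rewrite umon_ldiv_iff_prefix, nf_letter. intro Hpre. setoid_rewrite umon_cong_iff_nf.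
  pose proof (nf_reduced g) as Hg. destruct (nf g) as [|p n] eqn:E.
  - exists (src a). split; [apply cat_ldiv_src_l|].
    rewrite nf_letter, push_identity; [reflexivity|apply src_is_identity].
  - destruct (classic (is_identity a)) as [Ha|Ha];
      [rewrite push_identity in Hpre by exact Ha; contradiction|].
    rewrite push_nonidentity in Hpre by exact Ha.
    assert (n = []) as ->.
    { destruct Hpre as [[_ Hn]|[Hn _]]; [exact (ldiv_prefix_nil_r Hn)|exact Hn]. }
    exists p. split; [exact (ldiv_prefix_head Hpre)|].
    rewrite nf_letter, push_nonidentity; [reflexivity|apply Hg].
Qed.

Section Cancellative.
Hypothesis S_cancel : left_cancellative (@eq S) (fun x y => tgt x = src y) mul.

Lemma mul_eq_l_identity p z : tgt p = src z -> mul p z = p -> is_identity z.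
Proof.
  intros Hpz E. replace z with (tgt p); [apply tgt_is_identity|].
  apply (S_cancel p); [symmetry; apply src_tgt|exact Hpz|]. rewrite E. apply mul_tgt_r.
Qed.

Lemma ins_injective {p k1 k2} : ~ is_identity p -> reduced k1 -> reduced k2 ->
  ins p k1 = ins p k2 -> k1 = k2.
Proof.
  intros Hp Hk1 Hk2.
  destruct (ins_nonidentity Hp Hk1) as [->|(z1 & k1' & -> & Hpz1 & ->)];
  destruct (ins_nonidentity Hp Hk2) as [->|(z2 & k2' & -> & Hpz2 & ->)];
  intro E; injection E; intros; subst.
  - reflexivity.
  - exfalso. apply (proj1 Hk2). apply (mul_eq_l_identity p); auto.
  - exfalso. apply (proj1 Hk1). apply (mul_eq_l_identity p); auto.
  - f_equal. apply (S_cancel p); auto.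
Qed.

Lemma act_injective {g w1 w2} : reduced g -> reduced w1 -> reduced w2 ->
  act g w1 = act g w2 -> w1 = w2.
Proof.
  intros Hg Hw1 Hw2. induction g as [|p g IH]; [trivial|].
  destruct Hg as (Hp & Hg & _). intro E.
  apply IH; [exact Hg|]. apply (ins_injective Hp); auto using act_reduced.
Qed.

End Cancellative.

Section Gcd.
Hypothesis S_gcd : forall a b, src a = src b -> exists c, is_glb cat_ldiv c a b.

Definition reduced_glb g u v : Prop :=
  reduced g /\ ldiv_prefix g u /\ ldiv_prefix g v /\
  forall k, reduced k -> ldiv_prefix k u -> ldiv_prefix k v -> ldiv_prefix k g.

(* Two words starting with different letters can only share a one-letter
   divisor, namely a left divisor of their first letters. *)
Lemma reduced_glb_distinct_heads x y u v :
  x <> y -> exists g, reduced_glb g (x :: u) (y :: v).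
Proof.
  intro Hxy.
  assert (Hcommon : forall p k,
            ldiv_prefix (p :: k) (x :: u) -> ldiv_prefix (p :: k) (y :: v) ->
            k = [] /\ cat_ldiv p x /\ cat_ldiv p y).
  { intros p k H1 H2. split; [|exact (conj (ldiv_prefix_head H1) (ldiv_prefix_head H2))].
    destruct H1 as [[-> _]|[-> _]]; [|reflexivity].
    destruct H2 as [[-> _]|[-> _]]; [contradiction|reflexivity]. }
  destruct (classic (src x = src y)) as [Hsrc|Hsrc].
  2:{ exists []. repeat split; [intros [|p k] _ H1 H2; [exact I|]].
      destruct (Hcommon p k H1 H2) as (_ & Hx & Hy).
      apply Hsrc. rewrite <- (cat_ldiv_src Hx). exact (cat_ldiv_src Hy). }
  destruct (S_gcd _ _ Hsrc) as (c & Hcx & Hcy & Hmax).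
  destruct (classic (is_identity c)) as [Hc|Hc].
  - exists []. repeat split; [intros [|p k] Hk H1 H2; [exact I|]].
    destruct (Hcommon p k H1 H2) as (_ & Hx & Hy).
    apply (proj1 Hk). apply divisor_of_identity with c; auto.
  - exists [c]. split; [simpl; tauto|]. split; [right; auto|]. split; [right; auto|].
    intros [|p k] _ H1 H2; [exact I|].
    destruct (Hcommon p k H1 H2) as (-> & Hx & Hy). right. auto.
Qed.

Lemma reduced_glb_exists {u v} : reduced u -> reduced v -> exists g, reduced_glb g u v.
Proof.
  revert v. induction u as [|x u IH]; intros v Hu Hv.
  { exists []. repeat split; intros [|p k] _ H1 _; [exact I|contradiction]. }
  destruct v as [|y v].
  { exists []. repeat split; intros [|p k] _ _ H2; [exact I|contradiction]. }
  destruct (classic (x = y)) as [<-|Hxy]; [|apply reduced_glb_distinct_heads; exact Hxy].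
  destruct Hu as (Hx & Hu & Hxu), Hv as (_ & Hv & _).
  destruct (IH v Hu Hv) as (g & Hg & Hgu & Hgv & Hmax).
  exists (x :: g). split; [exact (conj Hx (conj Hg (noncomposable_head_prefix Hgu Hxu)))|].
  split; [left; auto|]. split; [left; auto|].
  intros [|p k] Hk H1 H2; [exact I|].
  destruct H1 as [[-> H1]|H1]; [destruct H2 as [[_ H2]|H2]|];
    [|right; exact H2|right; exact H1].
  left. split; [reflexivity|]. apply Hmax; [apply Hk|exact H1|exact H2].
Qed.

End Gcd.
End Conical.
End Divisibility.

Section LeftGcdTransfer.
Context {S : Category}.

Lemma umon_left_gcd_of_category : left_gcd_category S -> umon_left_gcd_monoid S.
Proof.
  intros (Hcon & Hcan & Hgcd). split; [|split].
  - intros x y _ Hxy. apply umon_cong_iff_nf.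
    assert (Hdiv : umon_ldiv x []) by (exists y; split; [trivial|exact (uc_sym Hxy)]).
    apply (umon_ldiv_iff_prefix Hcon) in Hdiv. exact (ldiv_prefix_nil_r Hdiv).
  - intros a x y _ _ Hxy. apply umon_cong_iff_nf. apply umon_cong_iff_nf in Hxy.
    rewrite !nf_app in Hxy. apply (act_injective Hcon Hcan (nf_reduced a));
      auto using nf_reduced.
  - intros a b _.
    destruct (reduced_glb_exists Hcon Hgcd (nf_reduced a) (nf_reduced b))
      as (g & Hg & Hga & Hgb & Hmax).
    exists g. rewrite <- (nf_of_reduced Hg) in Hga, Hgb.
    split; [|split]; try apply (umon_ldiv_iff_prefix Hcon); auto.
    intros h Hha Hhb. apply (umon_ldiv_iff_prefix Hcon) in Hha, Hhb.
    apply (umon_ldiv_iff_prefix Hcon). rewrite (nf_of_reduced Hg).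
    apply Hmax; auto using nf_reduced.
Qed.

Lemma category_conical_of_umon :
  conical (fun _ _ => True) (@app S) (@umon_isId S) ->
  conical (fun x y : S => tgt x = src y) mul is_identity.
Proof.
  intros Ucon x y Hxy Hid.
  assert (Hx : umon_cong [x] []).
  { apply (Ucon [x] [y] I). exact (uc_trans (uc_mul _ _ _ Hxy) (uc_id Hid)). }
  apply umon_cong_iff_nf in Hx. rewrite nf_letter in Hx.
  destruct (classic (is_identity x)) as [Ix|Ix]; [exact Ix|].
  rewrite push_nonidentity in Hx by exact Ix. discriminate.
Qed.

Lemma category_left_cancellative_of_umon :
  left_cancellative (@umon_eqv S) (fun _ _ => True) (@app S) ->
  left_cancellative (@eq S) (fun x y => tgt x = src y) mul.
Proof.
  intros Ucan a x y Hax Hay E.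
  assert (Hxy : umon_cong [x] [y]).
  { apply (Ucan [a]); [trivial|trivial|].
    apply uc_trans with [mul a x]; [exact (uc_mul _ _ _ Hax)|].
    rewrite E. exact (uc_sym (uc_mul _ _ _ Hay)). }
  apply umon_cong_iff_nf in Hxy. rewrite !nf_letter in Hxy.
  destruct (classic (is_identity x)) as [Ix|Ix], (classic (is_identity y)) as [Iy|Iy].
  - rewrite <- Ix, <- Iy. congruence.
  - rewrite push_identity, push_nonidentity in Hxy by assumption. discriminate.
  - rewrite push_nonidentity, push_identity in Hxy by assumption. discriminate.
  - rewrite !push_nonidentity in Hxy by assumption. congruence.
Qed.

(* The gcd of a and b in S is the letter representing their gcd [g] in U_mon(S);
   identity divisors, which U_mon(S) cannot see, are handled by source equality. *)
Lemma category_gcd_of_umon :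
  conical (fun x y : S => tgt x = src y) mul is_identity ->
  (forall u v : list S, exists g, is_glb umon_ldiv g u v) ->
  forall a b : S, src a = src b -> exists c, is_glb cat_ldiv c a b.
Proof.
  intros Hcon Ugcd a b Hab.
  destruct (Ugcd [a] [b]) as (g & Hga & Hgb & Hmax).
  destruct (umon_divisor_of_letter Hcon Hga) as (c & Hca & Hgc).
  assert (Hsrc_c : src c = src a) by exact (cat_ldiv_src Hca).
  exists c. split; [exact Hca|split].
  - destruct (classic (is_identity c)) as [Ic|Ic].
    + apply cat_ldiv_identity_l; [exact Ic|]. rewrite <- Hab, <- Hsrc_c. symmetry. exact Ic.
    + apply (umon_ldiv_letters Hcon _ _ Ic).
      exact (umon_ldiv_cong Hgc (uc_refl _ [b]) Hgb).
  - intros h Hha Hhb. destruct (classic (is_identity h)) as [Ih|Ih].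
    + apply cat_ldiv_identity_l in Hha; [|exact Ih].
      apply cat_ldiv_identity_l; [exact Ih|]. congruence.
    + apply (umon_ldiv_letters Hcon _ _ Ih).
      apply (umon_ldiv_cong (uc_refl _ [h]) Hgc), Hmax;
        apply (umon_ldiv_letters Hcon _ _ Ih); assumption.
Qed.

Lemma category_left_gcd_of_umon : umon_left_gcd_monoid S -> left_gcd_category S.
Proof.
  intros (Ucon & Ucan & Ugcd).
  pose proof (category_conical_of_umon Ucon) as Hcon.
  split; [exact Hcon|split].
  - exact (category_left_cancellative_of_umon Ucan).
  - apply (category_gcd_of_umon Hcon). intros u v. exact (Ugcd u v I).
Qed.

Lemma left_gcd_category_iff_umon : left_gcd_category S <-> umon_left_gcd_monoid S.
Proof. split; [apply umon_left_gcd_of_category|apply category_left_gcd_of_umon]. Qed.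

End LeftGcdTransfer.

Section Duality.
Variables (T : Type) (eqv def : T -> T -> Prop) (m : T -> T -> T) (isId : T -> Prop)
  (same : T -> T -> Prop).

Lemma right_gcd_struct_flip :
  (conical def m isId <-> conical (fun x y => def y x) (fun x y => m y x) isId) ->
  is_right_gcd_struct eqv def m isId same <->
  is_left_gcd_struct eqv (fun x y => def y x) (fun x y => m y x) isId same.
Proof.
  intro Hflip. unfold is_right_gcd_struct, is_left_gcd_struct. rewrite Hflip. reflexivity.
Qed.

End Duality.

Section Transport.
Variables (T T' : Type)
  (eqv def : T -> T -> Prop) (m : T -> T -> T) (isId : T -> Prop) (same : T -> T -> Prop)
  (eqv' def' : T' -> T' -> Prop) (m' : T' -> T' -> T') (isId' : T' -> Prop)
  (same' : T' -> T' -> Prop) (f : T -> T').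
Hypotheses (f_surj : forall y, exists x, y = f x)
  (eqv_f : forall x y, eqv' (f x) (f y) <-> eqv x y)
  (def_f : forall x y, def' (f x) (f y) <-> def x y)
  (m_f : forall x y, m' (f x) (f y) = f (m x y))
  (isId_f : forall x, isId' (f x) <-> isId x)
  (same_f : forall x y, same' (f x) (f y) <-> same x y).

Lemma ldiv_transport a b : ldiv eqv' def' m' (f a) (f b) <-> ldiv eqv def m a b.
Proof.
  split.
  - intros (x' & Hdef & Heqv). destruct (f_surj x') as [x ->].
    exists x. rewrite m_f in Heqv. split; [apply def_f|apply eqv_f]; assumption.
  - intros (x & Hdef & Heqv). exists (f x).
    rewrite m_f. split; [apply def_f|apply eqv_f]; assumption.
Qed.

Lemma is_glb_transport g a b :
  is_glb (ldiv eqv' def' m') (f g) (f a) (f b) <-> is_glb (ldiv eqv def m) g a b.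
Proof.
  unfold is_glb. rewrite !ldiv_transport. split.
  - intros (Ha & Hb & Hmax). repeat split; auto.
    intros h Hha Hhb. apply ldiv_transport, Hmax; apply ldiv_transport; assumption.
  - intros (Ha & Hb & Hmax). repeat split; auto.
    intros h' Hha Hhb. destruct (f_surj h') as [h ->].
    apply ldiv_transport in Hha, Hhb. apply ldiv_transport, Hmax; assumption.
Qed.

Lemma left_gcd_struct_transport :
  is_left_gcd_struct eqv' def' m' isId' same' <-> is_left_gcd_struct eqv def m isId same.
Proof.
  unfold is_left_gcd_struct, conical, left_cancellative. split.
  - intros (Hcon & Hcan & Hgcd). split; [|split].
    + intros x y Hxy Hid. apply isId_f, (Hcon (f x) (f y));
        [apply def_f|rewrite m_f; apply isId_f]; assumption.
    + intros a x y Hx Hy E. apply eqv_f, (Hcan (f a));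
        [apply def_f..|rewrite !m_f; apply eqv_f]; assumption.
    + intros a b Hab. destruct (Hgcd (f a) (f b)) as [g' Hg]; [apply same_f; exact Hab|].
      destruct (f_surj g') as [g ->]. exists g. apply is_glb_transport. exact Hg.
  - intros (Hcon & Hcan & Hgcd). split; [|split].
    + intros x' y' Hxy Hid. destruct (f_surj x') as [x ->], (f_surj y') as [y ->].
      rewrite m_f, isId_f in Hid. apply isId_f, (Hcon x y); [apply def_f|]; assumption.
    + intros a' x' y' Hx Hy E.
      destruct (f_surj a') as [a ->], (f_surj x') as [x ->], (f_surj y') as [y ->].
      rewrite !m_f, eqv_f in E. apply eqv_f, (Hcan a); [apply def_f..|]; assumption.
    + intros a' b' Hab. destruct (f_surj a') as [a ->], (f_surj b') as [b ->].
      destruct (Hgcd a b) as [g Hg]; [apply same_f; exact Hab|].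
      exists (f g). apply is_glb_transport. exact Hg.
Qed.

End Transport.

Section Opposite.
Variable S : Category.

Definition opposite : Category.
Proof.
  refine (@Build_Category (arr S) (@tgt S) (@src S) (fun x y => mul y x)
            (tgt_tgt S) (src_tgt S) (tgt_src S) (src_src S) (mul_tgt_r S) (mul_src_l S)
            _ _ _).
  - intros x y Hxy. apply tgt_mul. symmetry. exact Hxy.
  - intros x y Hxy. apply src_mul. symmetry. exact Hxy.
  - intros x y z Hxy Hyz. symmetry. apply mul_assoc; symmetry; assumption.
Defined.

Lemma is_identity_opposite (e : S) : @is_identity opposite e <-> is_identity e.
Proof.
  unfold is_identity; cbn. split; intro He.
  - rewrite <- He at 1. rewrite src_tgt. exact He.
  - rewrite <- He at 1. rewrite tgt_src. exact He.
Qed.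

Lemma right_gcd_category_iff_opposite : right_gcd_category S <-> left_gcd_category opposite.
Proof.
  unfold right_gcd_category.
  rewrite right_gcd_struct_flip by apply category_conical_flip.
  symmetry. apply left_gcd_struct_transport with (f := fun x : S => x); cbn.
  - intro x. exists x. reflexivity.
  - reflexivity.
  - intros x y. split; apply eq_sym.
  - reflexivity.
  - apply is_identity_opposite.
  - reflexivity.
Qed.

Lemma umon_cong_opposite_rev (u v : list S) :
  @umon_cong opposite u v -> umon_cong (rev u) (rev v).
Proof.
  induction 1 as [e He|x y Hxy|u|u v _ IH|u v w _ IH1 _ IH2|u u' v v' _ IHu _ IHv].
  - apply uc_id, is_identity_opposite. exact He.
  - exact (uc_mul S y x (eq_sym Hxy)).
  - apply uc_refl.
  - exact (uc_sym IH).
  - exact (uc_trans IH1 IH2).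
  - rewrite !rev_app_distr. exact (uc_app IHv IHu).
Qed.

Lemma umon_cong_rev_opposite (u v : list S) :
  umon_cong u v -> @umon_cong opposite (rev u) (rev v).
Proof.
  induction 1 as [e He|x y Hxy|u|u v _ IH|u v w _ IH1 _ IH2|u u' v v' _ IHu _ IHv].
  - apply (@uc_id opposite), is_identity_opposite. exact He.
  - exact (uc_mul opposite y x (eq_sym Hxy)).
  - apply uc_refl.
  - exact (uc_sym IH).
  - exact (uc_trans IH1 IH2).
  - rewrite !rev_app_distr. exact (uc_app IHv IHu).
Qed.

Lemma umon_cong_opposite_iff (u v : list S) :
  @umon_cong opposite (rev u) (rev v) <-> umon_cong u v.
Proof.
  split; [|apply umon_cong_rev_opposite].
  intro H. apply umon_cong_opposite_rev in H. rewrite !rev_involutive in H. exact H.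
Qed.

Lemma umon_conical_flip :
  conical (fun _ _ => True) (@app S) (@umon_isId S) <->
  conical (fun _ _ => True) (fun x y => y ++ x) (@umon_isId S).
Proof.
  assert (Hcancel_l : forall x y : list S,
            umon_cong (x ++ y) [] -> umon_cong x [] -> umon_cong y []).
  { intros x y Hxy Hx. apply uc_trans with (x ++ y); [|exact Hxy].
    exact (uc_app (uc_sym Hx) (uc_refl _ y)). }
  assert (Hcancel_r : forall x y : list S,
            umon_cong (x ++ y) [] -> umon_cong y [] -> umon_cong x []).
  { intros x y Hxy Hy. apply uc_trans with (x ++ y); [|exact Hxy].
    rewrite <- (app_nil_r x) at 1. exact (uc_app (uc_refl _ x) (uc_sym Hy)). }
  split; intros Hcon x y _ Hid.
  - exact (Hcancel_l y x Hid (Hcon y x I Hid)).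
  - exact (Hcancel_r x y Hid (Hcon y x I Hid)).
Qed.

Lemma umon_right_gcd_iff_opposite :
  umon_right_gcd_monoid S <-> umon_left_gcd_monoid opposite.
Proof.
  unfold umon_right_gcd_monoid. rewrite right_gcd_struct_flip by apply umon_conical_flip.
  symmetry. apply left_gcd_struct_transport with (f := @rev S).
  - intro y. exists (rev y). symmetry. apply rev_involutive.
  - apply umon_cong_opposite_iff.
  - reflexivity.
  - intros x y. symmetry. apply rev_app_distr.
  - intro x. exact (umon_cong_opposite_iff x []).
  - reflexivity.
Qed.

End Opposite.

Theorem theorem5p9 (S : Category) :
  (left_gcd_category S <-> umon_left_gcd_monoid S) /\
  (right_gcd_category S <-> umon_right_gcd_monoid S) /\
  (gcd_category S <-> umon_gcd_monoid S).
Proof.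
  assert (Hright : right_gcd_category S <-> umon_right_gcd_monoid S).
  { rewrite right_gcd_category_iff_opposite, umon_right_gcd_iff_opposite.
    apply left_gcd_category_iff_umon. }
  split; [apply left_gcd_category_iff_umon|split; [exact Hright|]].
  unfold gcd_category, umon_gcd_monoid.
  rewrite left_gcd_category_iff_umon, Hright. reflexivity.
Qed.
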